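(* Let $R$ be a ring with $2\notin U(R)$, and let $G$ be a non-trivial abelian group such that the group ring $RG$ is a GWNC ring. Then $G$ is a $2$-group and $2\in{\rm Nil}(R)$.
   Context: All rings are associative with identity. For a ring $S$, $U(S)$, ${\rm Nil}(S)$, ${\rm Id}(S)$ denote units, nilpotents, idempotents. $S$ is GWNC if every $a\in S\setminus U(S)$ can be written as $a=q+e$ or $a=q-e$ with $q\in{\rm Nil}(S)$, $e\in{\rm Id}(S)$. A group is a $p$-group if the order of each of its elements is a power of the prime $p$. *)

(* Group ring R[G] for an arbitrary (possibly infinite)
   abelian group G, written additively as a zmodType, built on the free
   R-module {freeg G / R} of finite formal R-combinations of elements of G
   (multinomials' freeg.v), with the convolution product. *)
From HB Require Import structures.
From mathcomp Require Import all_boot all_order all_algebra.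
From mathcomp.multinomials Require Import freeg.
Set Implicit Arguments. Unset Strict Implicit. Unset Printing Implicit Defensive.
Import Order.TTheory GRing.Theory Num.Theory.
Local Open Scope ring_scope.

Section RawRing.
Variables (S : Type) (zero one : S) (add mul : S -> S -> S) (opp : S -> S).

Definition raw_unit (a : S) := exists b, mul a b = one /\ mul b a = one.
Definition raw_pow (a : S) (n : nat) := iter n (mul a) one.
Definition raw_nil (a : S) := exists n, raw_pow a n = zero.
Definition raw_idem (e : S) := mul e e = e.

Definition raw_GWNC :=
  forall a, ~ raw_unit a ->
    exists q e, raw_nil q /\ raw_idem e /\ (a = add q e \/ a = add q (opp e)).
End RawRing.

Section RingNotions.
Variable S : nzRingType.
Definition is_unit (a : S) := exists b : S, a * b = 1 /\ b * a = 1.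
Definition is_nilpotent (a : S) := exists n : nat, a ^+ n = 0.
Definition is_idempotent (e : S) := e * e = e.
Definition GWNC := raw_GWNC 0 1 (@GRing.add S) (@GRing.mul S) (@GRing.opp S).
End RingNotions.

Section GroupRing.
Variables (R : nzRingType) (G : zmodType).
Definition grpring := {freeg G / R}.
Definition gr_one : grpring := << (1 : R) *g (0 : G) >>.
Definition gr_mul (a b : grpring) : grpring :=
  \sum_(g <- dom a) \sum_(h <- dom b) << (coeff g a * coeff h b) *g (g + h) >>.
Definition grpring_GWNC :=
  raw_GWNC (0 : grpring) gr_one (@GRing.add grpring) gr_mul (@GRing.opp grpring).
End GroupRing.

Definition is_pgroup (p : nat) (G : zmodType) :=
  forall g : G, exists k : nat, g *+ (p ^ k) = 0.

From HB Require Import structures.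
From mathcomp Require Import all_boot all_order all_algebra.
From mathcomp.multinomials Require Import freeg.
From mathcomp Require Import zify.
Set Implicit Arguments. Unset Strict Implicit. Unset Printing Implicit Defensive.
Import GRing.Theory.
Local Open Scope ring_scope.

(* The augmentation RG -> R shows that 2 is not a unit of RG, so 2 = q +- f in
   RG and hence in R.  The sign - yields a central idempotent e of R with
   3^k e = 0 and 2^k (1 - e) = 0 (the sign + gives e = 0), and e <> 1 since 2
   is not a unit.  For g in G, GWNC at the central non-unit x = (1 - e)(1 - g)
   of RG makes x^2 -+ x nilpotent; as 2^k x = 0 this means that x^2 - x = - x g
   is nilpotent, so x is nilpotent and (1 - x)^(2^M) = 1 for some M.  Comparing
   coefficients, g has 2-power order.  Finally, for an involution h of G, GWNC
   at e h makes y = e (1 -+ h) nilpotent with y^2 = 2 y; as 2 is invertible on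
   eR this forces y = 0, hence e = 0 and 2^k = 0 in R. *)

Lemma dvdn_bin_pfactor p m N i : prime p -> (0 < i < p ^ N)%N ->
  (p ^ m %| 'C(p ^ (m + N), i))%N.
Proof.
move=> p_pr /andP[i_gt0 lt_i_pN]; have p_gt1 := prime_gt1 p_pr.
have le_i_n : (i <= p ^ (m + N))%N.
  by rewrite ltnW // (leq_trans lt_i_pN) // leq_pexp2l ?prime_gt0 ?leq_addl.
have bin_gt0 : (0 < 'C(p ^ (m + N), i))%N by rewrite bin_gt0.
have : (p ^ (m + N) %| i * 'C(p ^ (m + N), i))%N.
  case: i i_gt0 {lt_i_pN le_i_n bin_gt0} => // i _.
  by rewrite -mul_bin_diag dvdn_mulr.
rewrite !pfactor_dvdn ?muln_gt0 ?i_gt0 // lognM //.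
have : (logn p i < N)%N.
  rewrite -(ltn_exp2l _ _ p_gt1) (leq_ltn_trans _ lt_i_pN) //.
  by rewrite dvdn_leq // pfactor_dvdnn.
lia.
Qed.

Lemma elem_order_p (G : zmodType) p K (g : G) : g != 0 -> g *+ p ^ K = 0 ->
  exists2 h : G, h != 0 & h *+ p = 0.
Proof.
elim: K g => [|K IH] g g_neq0.
  by rewrite expn0 mulr1n => g0; rewrite g0 eqxx in g_neq0.
have [gp | gp_neq0] := eqVneq (g *+ p) 0; first by exists g.
by move=> gK; apply: IH gp_neq0 _; rewrite -mulrnA -expnS.
Qed.

Section RingFacts.
Variable S : nzRingType.
Implicit Types e f q u v x y : S.

Definition central x := forall y, GRing.comm x y.

Lemma central1 : central (1 : S).
Proof. by move=> y; apply/commr_sym/commr1. Qed.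

Lemma centralD x y : central x -> central y -> central (x + y).
Proof. by move=> cx cy z; apply/commr_sym/commrD; apply/commr_sym. Qed.

Lemma centralB x y : central x -> central y -> central (x - y).
Proof. by move=> cx cy z; apply/commr_sym/commrB; apply/commr_sym. Qed.

Lemma centralM x y : central x -> central y -> central (x * y).
Proof. by move=> cx cy z; apply/commr_sym/commrM; apply/commr_sym. Qed.

Lemma zero_nunit : ~ is_unit (0 : S).
Proof. by move=> [y [/eqP]]; rewrite mul0r eq_sym oner_eq0. Qed.

Lemma idem_unit_eq1 e : is_idempotent e -> is_unit e -> e = 1.
Proof. by move=> ee [v [ev _]]; rewrite -ev -{2}ee -mulrA ev mulr1. Qed.

Lemma idempotent_subr1 e : is_idempotent e -> is_idempotent (1 - e).
Proof. by move=> ee; rewrite /is_idempotent mulrBl mul1r mulrBr mulr1 ee subrr subr0. Qed.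

Lemma nilpotentN x : is_nilpotent x -> is_nilpotent (- x).
Proof. by move=> [n xn]; exists n; rewrite exprNn xn mulr0. Qed.

Lemma nilpotentM_comm x y : GRing.comm x y -> is_nilpotent x -> is_nilpotent (x * y).
Proof. by move=> cxy [n xn]; exists n; rewrite exprMn_comm // xn mul0r. Qed.

Lemma nilpotentD_comm x y : GRing.comm x y -> is_nilpotent x -> is_nilpotent y ->
  is_nilpotent (x + y).
Proof.
move=> cxy [m xm] [n yn]; exists (m + n)%N; rewrite exprDn_comm // big1 // => i _.
have [lt_i_n | le_n_i] := ltnP i n; last first.
  by rewrite -(subnK le_n_i) exprD yn !mulr0 mul0rn.
have /subnK <- : (m <= m + n - i)%N by lia.
by rewrite exprD xm mulr0 mul0r mul0rn.
Qed.

Lemma nilpotent_mulrn x p k : x *+ p ^ k = 0 -> is_nilpotent (x *+ p).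
Proof.
move=> xpk; exists k.+1.
by rewrite exprMn_n exprSr expnSr mulrnA -mulrnAr xpk mulr0 mul0rn.
Qed.

Lemma unipotent_expp x p m N : prime p -> x ^+ N = 0 -> x *+ p ^ m = 0 ->
  (1 + x) ^+ (p ^ (m + N)) = 1.
Proof.
move=> p_pr xN xm; rewrite addrC exprD1n big_ord_recl expr0 bin0 mulr1n.
rewrite big1 ?addr0 // => i _; rewrite lift0.
have [lt_iN | le_Ni] := ltnP i.+1 N; last first.
  by rewrite -(subnK le_Ni) exprD xN mulr0 mul0rn.
have /dvdnP[c ->] : (p ^ m %| 'C(p ^ (m + N), i.+1))%N.
  by rewrite dvdn_bin_pfactor // (leq_trans lt_iN) // ltnW // ltn_expl // prime_gt1.
by rewrite mulnC mulrnA exprS -mulrnAl xm mul0r mul0rn.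
Qed.

Lemma mulrn_coprime_eq0 x m n : coprime m n -> x *+ m = 0 -> x *+ n = 0 -> x = 0.
Proof.
have [-> | m_gt0] := posnP m.
  by rewrite /coprime gcd0n => /eqP -> _; rewrite mulr1n.
move=> /eqP co_mn xm xn; have [a b + _] := egcdnP n m_gt0.
rewrite co_mn => def1.
have : x *+ (a * m) = x *+ (b * n + 1) by rewrite def1.
by rewrite mulrnDr mulr1n !(mulnC _ m) !(mulnC _ n) !mulrnA xm xn !mul0rn add0r.
Qed.

Lemma unit2_of_odd_char n : odd n -> n%:R = 0 :> S -> is_unit (2%:R : S).
Proof.
move=> n_odd; rewrite -[n]odd_double_half n_odd -mul2n natrD natrM => /eqP.
rewrite addrC addr_eq0 => /eqP def_m1; exists (- (n./2)%:R).
split; first by rewrite mulrN def_m1 opprK.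
by rewrite mulNr -natrM mulnC natrM def_m1 opprK.
Qed.

Lemma eigen_exprn x q c n : x * q = x *+ c -> x * q ^+ n = x *+ (c ^ n).
Proof.
move=> xq; elim: n => [|n IH]; first by rewrite expr0 mulr1.
by rewrite exprSr mulrA IH mulrnAl xq -mulrnA -expnS.
Qed.

Lemma mulr_expr_congr x y z n : x * y = x * z -> GRing.comm x z ->
  x * y ^+ n = x * z ^+ n.
Proof.
move=> xyz cxz; elim: n => [|n IH]; first by rewrite !expr0.
by rewrite !exprSr !mulrA IH (commrX n cxz) -!mulrA xyz.
Qed.

(* The Peirce corners e x (1 - e) and (1 - e) x e are killed by both m and n. *)
Lemma idem_central_coprime e m n : is_idempotent e -> coprime m n ->
  e *+ m = 0 -> (1 - e) *+ n = 0 -> central e.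
Proof.
move=> ee co_mn em en x.
have kill a b y z : coprime a b -> y *+ a = 0 -> z *+ b = 0 -> y * x * z = 0.
  move=> co_ab ya zb; apply: (mulrn_coprime_eq0 co_ab).
    by rewrite -!mulrnAl ya !mul0r.
  by rewrite -mulrnAr zb mulr0.
have exe : e * x * (1 - e) = 0 by apply: (kill m n).
have xee : (1 - e) * x * e = 0 by apply: (kill n m); rewrite // coprime_sym.
move: exe xee; rewrite mulrBr !mulrBl mulr1 mul1r.
by rewrite /GRing.comm => /subr0_eq -> /subr0_eq; rewrite -mulrA ee => ->.
Qed.

Lemma char23_split q f : is_nilpotent q -> is_idempotent f ->
  2%:R = q + f \/ 2%:R = q - f ->
  exists e k, [/\ is_idempotent e, central e, e *+ 3 ^ k = 0 & (1 - e) *+ 2 ^ k = 0].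
Proof.
move=> [n qn] ff [def2 | def2].
  have fq : f * q = f *+ 1.
    by rewrite -[q](addrK f) -def2 mulrBr ff mulr_natr mulr2n addrK.
  have f0 : f = 0 by rewrite -[f]mulr1n -(exp1n n) -(eigen_exprn n fq) qn mulr0.
  exists 0, n; split; rewrite ?mul0rn //.
  - exact: mul0r.
  - by move=> y; rewrite /GRing.comm mul0r mulr0.
  - by rewrite subr0 natrX def2 f0 addr0.
have def_q : q = 2%:R + f by rewrite def2 subrK.
have fq : f * q = f *+ 3 by rewrite def_q mulrDr ff mulr_natr -mulrSr.
have gq : (1 - f) * q = (1 - f) *+ 2.
  by rewrite def_q mulrDr mulr_natr mulrBl ff mul1r subrr addr0.
have f3n : f *+ 3 ^ n = 0 by rewrite -(eigen_exprn n fq) qn mulr0.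
have g2n : (1 - f) *+ 2 ^ n = 0 by rewrite -(eigen_exprn n gq) qn mulr0.
exists f, n; split=> //; apply: idem_central_coprime ff _ f3n g2n.
by rewrite coprimeXl // coprimeXr.
Qed.

Lemma raw_powE x n : raw_pow 1 *%R x n = x ^+ n.
Proof. by elim: n => //= n ->; rewrite exprS. Qed.

Lemma GWNCP : GWNC S -> forall x, ~ is_unit x ->
  exists q e, [/\ is_nilpotent q, is_idempotent e & x = q + e \/ x = q - e].
Proof.
move=> gwnc x x_nunit; have [q [e [[n qn] [ee def_x]]]] := gwnc x x_nunit.
by exists q, e; split=> //; exists n; rewrite -raw_powE.
Qed.

Lemma sqr_subr_idem x f : GRing.comm x f -> is_idempotent f ->
  (x - f) * (x + f - 1) = x * x - x.
Proof.
move=> cxf ff; rewrite mulrBl !mulrBr !mulrDr !mulr1 ff cxf.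
by rewrite addrK addrAC addrK.
Qed.

Lemma nilpotent_sqr_subr x q f : central x -> is_nilpotent q -> is_idempotent f ->
  x = q + f -> is_nilpotent (x * x - x).
Proof.
move=> cx qn ff def_x; have def_q : q = x - f by rewrite def_x addrK.
rewrite -(sqr_subr_idem (cx f) ff) -def_q; apply: nilpotentM_comm qn; rewrite def_q.
have cqf : GRing.comm (x - f) f := commr_sym (commrB (commr_sym (cx f)) (commr_refl f)).
exact: commrB (commrD (commr_sym (cx _)) cqf) (commr1 _).
Qed.

(* x = q - f is the same as - x = (- q) + f. *)
Lemma GWNC_central_sqr x : GWNC S -> central x -> ~ is_unit x ->
  is_nilpotent (x * x - x) \/ is_nilpotent (x * x + x).
Proof.
move=> gwnc cx /(GWNCP gwnc)[q [f [qn ff [def_x | def_x]]]].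
  by left; apply: nilpotent_sqr_subr cx qn ff def_x.
right; rewrite -mulrNN -[X in _ + X]opprK.
apply: nilpotent_sqr_subr (nilpotentN qn) ff _; last by rewrite def_x opprB addrC.
by move=> y; apply/commr_sym/commrN/commr_sym.
Qed.

Lemma GWNC_idem_unipotent e u k : GWNC S ->
  is_idempotent e -> central e -> e *+ 2 ^ k = 0 ->
  central u -> is_unit u -> ~ is_unit (e * (1 - u)) ->
  exists M, e * u ^+ (2 ^ M) = e.
Proof.
move=> gwnc ee ce e2k cu [v [uv vu]] x_nunit; set x := e * (1 - u).
have cx : central x by apply: centralM; last apply: centralB central1 cu.
have x2k : x *+ 2 ^ k = 0 by rewrite -mulrnAl e2k mul0r.
have ex : e * x = x by rewrite mulrA ee.
have sqr_x : x * x - x = - (x * u).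
  by rewrite {2}/x mulrA (cx e) ex mulrBr mulr1 addrAC subrr add0r.
have nil_sqr : is_nilpotent (x * x - x).
  have [// | nil_sqr'] := GWNC_central_sqr gwnc cx x_nunit.
  have -> : x * x - x = (x * x + x) + (- x) *+ 2.
    by rewrite mulNrn mulr2n opprD addrA addrK.
  have nil_2x : is_nilpotent ((- x) *+ 2).
    by apply: (nilpotent_mulrn (k := k)); rewrite mulNrn x2k oppr0.
  exact: nilpotentD_comm (centralD (centralM cx cx) cx _) nil_sqr' nil_2x.
have [N xN] : is_nilpotent x.
  have -> : x = (x * x - x) * - v by rewrite sqr_x mulrNN -mulrA uv mulr1.
  exact: nilpotentM_comm (commrN (centralB (centralM cx cx) cx v)) nil_sqr.
have unip : (1 - x) ^+ (2 ^ (k + N)) = 1.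
  apply: unipotent_expp => //; first by rewrite exprNn xN mulr0.
  by rewrite mulNrn x2k oppr0.
have eu : e * (1 - x) = e * u.
  by rewrite mulrBr mulr1 ex /x mulrBr mulr1 opprB addrC subrK.
by exists (k + N)%N; rewrite -(mulr_expr_congr _ eu (ce u)) unip mulr1.
Qed.

Lemma nilpotent_sqr_mul2_eq0 y n : odd n -> y *+ n = 0 ->
  y * y = y *+ 2 -> is_nilpotent y -> y = 0.
Proof.
move=> n_odd yn yy [N yN].
have yX m : y ^+ m.+1 = y *+ 2 ^ m.
  elim: m => [|m IH]; first by rewrite expr1.
  by rewrite exprSr IH mulrnAl yy -mulrnA -expnS.
apply: (mulrn_coprime_eq0 (n := 2 ^ N) _ yn).
  by rewrite coprime_sym coprimeXl // coprime2n.
by rewrite -yX exprSr yN mul0r.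
Qed.

Lemma GWNC_idem_involution e d n : GWNC S ->
  is_idempotent e -> central e -> odd n -> e *+ n = 0 ->
  central d -> d * d = 1 -> ~ is_unit (e * d) -> e * d = e \/ e * d = - e.
Proof.
move=> gwnc ee ce n_odd en cd dd x_nunit; set x := e * d.
have xx : x * x = e by rewrite /x -mulrA (mulrA d) (cd e) -!mulrA dd mulr1 ee.
have ex : e * x = x by rewrite /x mulrA ee.
have xe : x * e = x by rewrite -(ce x).
have kill y : e * y = y -> y * y = y *+ 2 -> is_nilpotent y -> y = 0.
  move=> ey; apply: nilpotent_sqr_mul2_eq0 n_odd _.
  by rewrite -ey -mulrnAl en mul0r.
have [nil_sqr | nil_sqr] := GWNC_central_sqr gwnc (centralM ce cd) x_nunit;
  rewrite xx in nil_sqr; [left | right].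
  apply/esym/subr0_eq/kill => //; first by rewrite mulrBr ee ex.
  by rewrite mulrBl !mulrBr ee ex xe xx opprB mulr2n.
apply/eqP; rewrite -addr_eq0 addrC; apply/eqP/kill => //; first by rewrite mulrDr ee ex.
by rewrite mulrDl !mulrDr ee ex xe xx [x + e]addrC mulr2n.
Qed.

End RingFacts.

Lemma rmorph_is_unit (S T : nzRingType) (phi : {rmorphism S -> T}) x :
  is_unit x -> is_unit (phi x).
Proof. by move=> [y [xy yx]]; exists (phi y); rewrite -!rmorphM xy yx rmorph1. Qed.

HB.instance Definition _ (R : nzRingType) (G : zmodType) (M : lmodType R) (f : G -> M) :=
  GRing.isZmodMorphism.Build {freeg G / R} M (fglift f) (lift_is_additive f).

Section GroupRingStructure.
Variables (R : nzRingType) (G : zmodType).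
Local Notation RG := {freeg G / R}.
Implicit Types (a b c : RG) (r s : R) (g h : G).

Lemma freeg_ind (P : RG -> Prop) : P 0 -> (forall a b, P a -> P b -> P (a + b)) ->
  (forall r g, P << r *g g >>) -> forall a, P a.
Proof. by move=> P0 PD PU; elim/freeg_ind_dom0 => // r g a _ _; apply: PD. Qed.

Lemma fglift_dom (M : lmodType R) (f : G -> M) a :
  fglift f a = \sum_(g <- dom a) coeff g a *: f g.
Proof. by rewrite -{1}[a]freeg_sumE raddf_sum; apply: eq_bigr => g _; apply: liftU. Qed.

Lemma scale_freegU r s g : r *: << s *g g >> = << r * s *g g >> :> RG.
Proof. by apply/eqP/freeg_eqP => h; rewrite coeffZ !coeffU mulrA. Qed.

Definition translate g : RG -> RG := fglift (fun h => << 1 *g (g + h) >>).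

Lemma gr_mulE a b : gr_mul a b = fglift (translate^~ b) a.
Proof.
rewrite fglift_dom /gr_mul; apply: eq_bigr => g _.
rewrite /translate fglift_dom scaler_sumr; apply: eq_bigr => h _.
by rewrite !scale_freegU mulr1.
Qed.

Lemma gr_mulDl a b c : gr_mul (a + b) c = gr_mul a c + gr_mul b c.
Proof. by rewrite !gr_mulE raddfD. Qed.

Lemma gr_mulDr a b c : gr_mul a (b + c) = gr_mul a b + gr_mul a c.
Proof.
rewrite !gr_mulE !fglift_dom -big_split; apply: eq_bigr => g _.
by rewrite /translate raddfD scalerDr.
Qed.

Lemma gr_mul0l a : gr_mul 0 a = 0.
Proof. by rewrite /gr_mul dom0 big_nil. Qed.

Lemma gr_mul0r a : gr_mul a 0 = 0.
Proof. by rewrite /gr_mul big1 // => g _; rewrite dom0 big_nil. Qed.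

Lemma gr_mulU r s g h : gr_mul << r *g g >> << s *g h >> = << r * s *g (g + h) >>.
Proof. by rewrite gr_mulE liftU /translate liftU !scale_freegU mulr1. Qed.

Lemma gr_mulA : associative (@gr_mul R G).
Proof.
move=> a b c; elim/freeg_ind: a => [|a1 a2 IH1 IH2|r g].
- by rewrite !gr_mul0l.
- by rewrite !gr_mulDl IH1 IH2.
elim/freeg_ind: b => [|b1 b2 IH1 IH2|s h].
- by rewrite gr_mul0r gr_mul0l gr_mul0r.
- by rewrite !(gr_mulDl, gr_mulDr) IH1 IH2.
elim/freeg_ind: c => [|c1 c2 IH1 IH2|t k].
- by rewrite !gr_mul0r.
- by rewrite !gr_mulDr IH1 IH2.
by rewrite !gr_mulU mulrA addrA.
Qed.

Lemma gr_mul1l : left_id (gr_one R G) (@gr_mul R G).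
Proof.
elim/freeg_ind => [|a b IHa IHb|r g]; first exact: gr_mul0r.
  by rewrite gr_mulDr IHa IHb.
by rewrite gr_mulU mul1r add0r.
Qed.

Lemma gr_mul1r : right_id (gr_one R G) (@gr_mul R G).
Proof.
elim/freeg_ind => [|a b IHa IHb|r g]; first exact: gr_mul0l.
  by rewrite gr_mulDl IHa IHb.
by rewrite gr_mulU mulr1 addr0.
Qed.

Lemma gr_one_neq0 : gr_one R G != 0.
Proof. by rewrite freegU_eq0 oner_neq0. Qed.

End GroupRingStructure.

HB.instance Definition _ (R : nzRingType) (G : zmodType) :=
  GRing.Zmodule.on (grpring R G).
HB.instance Definition _ (R : nzRingType) (G : zmodType) :=
  GRing.Zmodule_isNzRing.Build (grpring R G) (@gr_mulA R G) (@gr_mul1l R G)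
    (@gr_mul1r R G) (@gr_mulDl R G) (@gr_mulDr R G) (@gr_one_neq0 R G).

Section GroupRingMaps.
Variables (R : nzRingType) (G : zmodType).
Local Notation RG := (grpring R G).
Implicit Types (a : RG) (r s : R) (g h : G).

Lemma mulU r s g h : (<< r *g g >> : RG) * << s *g h >> = << r * s *g (g + h) >>.
Proof. exact: gr_mulU. Qed.

Definition grC r : RG := << r *g 0 >>.

Lemma grC_is_zmod_morphism : zmod_morphism grC.
Proof. by move=> r s; rewrite /grC freegUB. Qed.

Lemma grC_is_monoid_morphism : monoid_morphism grC.
Proof. by split=> // r s; rewrite /grC mulU addr0. Qed.

HB.instance Definition _ := GRing.isZmodMorphism.Build R RG grC grC_is_zmod_morphism.
HB.instance Definition _ := GRing.isMonoidMorphism.Build R RG grC grC_is_monoid_morphism.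

Definition grelt g : RG := << 1 *g g >>.

Lemma greltD g h : grelt (g + h) = grelt g * grelt h.
Proof. by rewrite mulU mulr1. Qed.

Lemma greltMn g n : grelt (g *+ n) = grelt g ^+ n.
Proof. by elim: n => [|n IH]; rewrite ?mulr0n // mulrS exprS greltD IH. Qed.

Lemma grelt_unit g : is_unit (grelt g).
Proof. by exists (grelt (- g)); rewrite -!greltD subrr addNr. Qed.

Lemma grelt_central g : central (grelt g).
Proof.
elim/freeg_ind => [|a b IHa IHb|r h]; rewrite /GRing.comm.
- by rewrite mulr0 mul0r.
- by rewrite mulrDr mulrDl IHa IHb.
by rewrite !mulU mul1r mulr1 addrC.
Qed.

Lemma grC_central r : central r -> central (grC r).
Proof.
move=> cr; elim/freeg_ind => [|a b IHa IHb|s h]; rewrite /GRing.comm.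
- by rewrite mulr0 mul0r.
- by rewrite mulrDr mulrDl IHa IHb.
by rewrite !mulU cr addr0 add0r.
Qed.

Lemma grC_grelt r g : grC r * grelt g = << r *g g >>.
Proof. by rewrite mulU mulr1 add0r. Qed.

Definition aug : RG -> R := fglift (fun _ => 1 : R^o).

HB.instance Definition _ := GRing.isZmodMorphism.Build RG R aug
  (@lift_is_additive R G R^o (fun _ => 1)).

Lemma augU r g : aug << r *g g >> = r.
Proof. by rewrite /aug liftU /GRing.scale /= mulr1. Qed.

Lemma aug_grC r : aug (grC r) = r.
Proof. exact: augU. Qed.

Lemma aug_grelt g : aug (grelt g) = 1.
Proof. exact: augU. Qed.

Lemma aug_is_monoid_morphism : monoid_morphism aug.
Proof.
split=> [|a b]; first exact: augU.
elim/freeg_ind: a => [|a1 a2 IH1 IH2|r g]; rewrite ?mul0r ?mulrDl.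
- by rewrite !raddf0 mul0r.
- by rewrite !raddfD /= IH1 IH2 mulrDl.
elim/freeg_ind: b => [|b1 b2 IH1 IH2|s h]; rewrite ?mulr0 ?mulrDr.
- by rewrite !raddf0 mulr0.
- by rewrite !raddfD /= IH1 IH2 mulrDr.
by rewrite mulU !augU.
Qed.

HB.instance Definition _ := GRing.isMonoidMorphism.Build RG R aug aug_is_monoid_morphism.

Lemma freegU_supp r s g h : << r *g g >> = << s *g h >> :> RG -> g != h -> r = 0.
Proof.
move=> /(congr1 (coeff g)); rewrite !coeffU eqxx mulr1 => -> /negbTE.
by rewrite eq_sym => ->; rewrite mulr0.
Qed.

End GroupRingMaps.

Section GWNCGroupRing.
Variables (R : nzRingType) (G : zmodType).
Hypothesis gwnc : GWNC (grpring R G).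

Lemma GWNC_grpring_pgroup (e : R) k : is_idempotent e -> central e -> e != 1 ->
  (1 - e) *+ 2 ^ k = 0 -> is_pgroup 2 G.
Proof.
move=> ee ce e_neq1 e2k g; pose P := grC G (1 - e).
have x_nunit : ~ is_unit (P * (1 - grelt R g)).
  move/(rmorph_is_unit (@aug R G : {rmorphism _ -> _})); rewrite /= rmorphM /= aug_grC.
  by rewrite rmorphB rmorph1 /= aug_grelt subrr mulr0; apply: zero_nunit.
have PP : is_idempotent P by rewrite /is_idempotent -rmorphM (idempotent_subr1 ee).
have P2k : P *+ 2 ^ k = 0 by rewrite -rmorphMn e2k rmorph0.
have [M] := GWNC_idem_unipotent gwnc PP (grC_central (centralB (@central1 R) ce)) P2k
  (grelt_central g) (grelt_unit R g) x_nunit.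
rewrite -greltMn grC_grelt => /freegU_supp eq_g.
exists M; apply/eqP; apply: contraNT e_neq1 => /eq_g /eqP.
by rewrite subr_eq0 eq_sym.
Qed.

Lemma GWNC_grpring_idem_eq0 (e : R) (n : nat) (h : G) :
  is_idempotent e -> central e -> e != 1 -> odd n -> e *+ n = 0 ->
  h != 0 -> h *+ 2 = 0 -> e = 0.
Proof.
move=> ee ce e_neq1 n_odd en h_neq0 h2; pose E := grC G e; pose d := grelt R h.
have x_nunit : ~ is_unit (E * d).
  move/(rmorph_is_unit (@aug R G : {rmorphism _ -> _})).
  rewrite /= rmorphM /= aug_grC aug_grelt mulr1.
  by move/(idem_unit_eq1 ee)/eqP; apply/negP.
have EE : is_idempotent E by rewrite /is_idempotent -rmorphM ee.
have En : E *+ n = 0 by rewrite -rmorphMn en rmorph0.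
have dd : d * d = 1 by rewrite -greltD -mulr2n h2.
have := GWNC_idem_involution gwnc EE (grC_central ce) n_odd En (grelt_central h) dd x_nunit.
by rewrite grC_grelt /E /grC freegUN => -[] /freegU_supp; apply.
Qed.

Lemma GWNC_grpring_char23_split : ~ is_unit (2%:R : R) ->
  exists (e : R) k,
    [/\ is_idempotent e, central e, e *+ 3 ^ k = 0 & (1 - e) *+ 2 ^ k = 0].
Proof.
move=> two_nunit.
have two_nunit_RG : ~ is_unit (2%:R : grpring R G).
  by move/(rmorph_is_unit (@aug R G : {rmorphism _ -> _})); rewrite rmorph_nat.
have [q [f [qn ff def2]]] := GWNCP gwnc two_nunit_RG.
apply: (@char23_split _ (aug q) (aug f)).
- by case: qn => n qn; exists n; rewrite -rmorphXn qn rmorph0.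
- by rewrite /is_idempotent -rmorphM ff.
- by rewrite -(rmorph_nat (@aug R G)) -rmorphD -rmorphB; case: def2 => ->; [left | right].
Qed.

End GWNCGroupRing.

Theorem theorem3p6 (R : nzRingType) (G : zmodType) :
  ~ is_unit (2%:R : R) ->
  (exists g : G, g != 0) ->
  grpring_GWNC R G ->
  is_pgroup 2 G /\ is_nilpotent (2%:R : R).
Proof.
move=> two_nunit [g g_neq0] gwnc.
have [e [k [ee ce e3k e2k]]] := GWNC_grpring_char23_split gwnc two_nunit.
have odd3k : odd (3 ^ k) by rewrite oddX orbT.
have e_neq1 : e != 1.
  by apply: contra_notN two_nunit => /eqP e1; apply: (unit2_of_odd_char odd3k); rewrite -e1.
have pG := GWNC_grpring_pgroup gwnc ee ce e_neq1 e2k.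
have [K gK] := pG g; have [h h_neq0 h2] := elem_order_p g_neq0 gK.
have e0 := GWNC_grpring_idem_eq0 gwnc ee ce e_neq1 odd3k e3k h_neq0 h2.
by split=> //; exists k; rewrite -natrX -e2k e0 subr0.
Qed.
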